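(* Let $(X,\Sigma,\mu)$ be a semi-finite measure space, and let $E$ be the ideal in $\mathrm{L}^0(X,\Sigma,\mu)$ consisting of (equivalence classes of) measurable functions with $\sigma$-finite supports. Let $A$ be a subset of $E$. Then $A$ is closed in $E$ with respect to the topology of local convergence in measure if and only if $A$ contains the almost everywhere limits (in $E$) of all sequences in $A$.
   Context: $\mathrm{L}^0(X,\Sigma,\mu)$ is the vector lattice of measurable real functions modulo $\mu$-a.e. equality. A measure space is semi-finite if every set of infinite measure contains a measurable subset of finite positive measure. A net $(f_\alpha)$ converges locally in measure to $f$ if $\mu(\{t\in B: |f_\alpha(t)-f(t)|\geq\varepsilon\})\to0$ for every $\varepsilon>0$ and every $B\in\Sigma$ with $\mu(B)<\infty$. *)

From HB Require Import structures.
From mathcomp Require Import all_boot all_order all_algebra.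
From mathcomp Require Import all_classical all_reals all_analysis.

Set Implicit Arguments.
Unset Strict Implicit.
Unset Printing Implicit Defensive.
Import Order.TTheory GRing.Theory Num.Theory.
Local Open Scope classical_set_scope.
Local Open Scope ring_scope.

Section Defs.
Context (d : measure_display) (T : measurableType d) (R : realType).
Variable mu : {measure set T -> \bar R}.

Definition semi_finite : Prop :=
  forall A : set T, measurable A -> mu A = +oo%E ->
    exists2 B : set T, measurable B /\ B `<=` A & (0 < mu B < +oo)%E.

Definition sigma_finite_support (f : T -> R) : Prop :=
  exists F : nat -> set T,
    (forall n, measurable (F n) /\ (mu (F n) < +oo)%E) /\
    [set t | f t != 0] `<=` \bigcup_n F n.

(** Representatives of elements of the ideal E of L^0. *)
Definition Eset : set (T -> R) :=
  [set f | measurable_fun setT f /\ sigma_finite_support f].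

(** A set of representatives is a.e.-saturated, i.e. it is the full
    preimage of a subset of the quotient L^0 (restricted to measurable
    functions). *)
Definition ae_saturated (A : set (T -> R)) : Prop :=
  forall f g : T -> R, A f -> measurable_fun setT g ->
    {ae mu, forall t, f t = g t} -> A g.

Definition directed (I : Type) (le : I -> I -> Prop) : Prop :=
  [/\ inhabited I, (forall i, le i i),
      (forall i j k, le i j -> le j k -> le i k) &
      (forall i j, exists k, le i k /\ le j k)].

Definition cvg_loc_meas (I : Type) (le : I -> I -> Prop)
    (f : I -> T -> R) (g : T -> R) : Prop :=
  forall (eps : R) (B : set T), 0 < eps -> measurable B -> (mu B < +oo)%E ->
    forall delta : R, 0 < delta ->
      exists i0 : I, forall i, le i0 i ->
        (mu [set t | B t /\ (eps <= `|f i t - g t|)%R] < delta%:E)%E.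

Definition closed_loc_meas (A : set (T -> R)) : Prop :=
  forall (I : Type) (le : I -> I -> Prop), directed le ->
    forall (f : I -> T -> R) (g : T -> R),
      (forall i, A (f i)) -> Eset g -> cvg_loc_meas le f g -> A g.

End Defs.

From HB Require Import structures.
From mathcomp Require Import all_boot all_order all_algebra.
From mathcomp Require Import all_classical all_reals all_analysis.
From mathcomp Require Import measurable_realfun.

(* A.e. convergence of a sequence implies local convergence in measure
   (Egorov's theorem on each set of finite measure), so closed sets contain
   a.e. limits of sequences.  Conversely, let a net (f_i) in E converge locally
   in measure to g in E.  Choose indices s_k one at a time: cover the supports
   of g and of f_(s_0), ..., f_(s_(k-1)) by countably many sets of finite
   measure, let B_k be the union of the first k of them, and pick s_k with
   mu (B_k ∩ {|f_(s_k) - g| >= 1/(k+1)}) < 2^-(k+1).  The B_k increase and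
   exhaust every support involved, so by Borel-Cantelli f_(s_k) -> g a.e.;
   outside the union of the B_k all functions vanish.  Neither semi-finiteness
   nor a.e.-saturation of A is needed. *)

Set Implicit Arguments.
Unset Strict Implicit.
Unset Printing Implicit Defensive.
Import Order.TTheory GRing.Theory Num.Theory numFieldNormedType.Exports.
Local Open Scope classical_set_scope.
Local Open Scope ring_scope.

Lemma directed_leq : directed (fun m n : nat => (m <= n)%N).
Proof.
split=> [|i|i j k|i j]; [exact: inhabits 0%N | exact: leqnn | exact: leq_trans|].
by exists (maxn i j); rewrite leq_maxl leq_maxr.
Qed.

Lemma cvg_lt_invS (R : realType) (u : nat -> R) (l : R) :
  (\forall k \near \oo, `|u k - l| < k.+1%:R^-1) -> u k @[k --> \oo] --> l.
Proof.
move=> u_near; apply/cvgrPdist_lt => e e0; near=> k.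
rewrite distrC (lt_trans (_ : _ < k.+1%:R^-1))//; first by near: k.
by near: k; exact: (near_infty_natSinv_lt (PosNum e0)).
Unshelve. all: by end_near.
Qed.

Section local_convergence_in_measure.
Context d (T : measurableType d) (R : realType).
Variable mu : {measure set T -> \bar R}.

Definition far_set (f g : T -> R) (e : R) : set T :=
  [set t | e <= `|f t - g t|].

Lemma measurable_far_set (f g : T -> R) (e : R) :
  measurable_fun setT f -> measurable_fun setT g -> measurable (far_set f g e).
Proof.
move=> mf mg; have := measurableT_comp (@normr_measurable R setT)
  (measurable_funB mf mg) measurableT (measurable_itv `[e, +oo[).
rewrite setTI; congr measurable.
by apply/seteqP; split=> t /=; rewrite in_itv/= andbT.
Qed.

Lemma ae_cvg_cvg_loc_meas (f : nat -> T -> R) (g : T -> R) :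
  (forall n, measurable_fun setT (f n)) -> measurable_fun setT g ->
  {ae mu, forall t, f n t @[n --> \oo] --> g t} ->
  cvg_loc_meas mu (fun m n => (m <= n)%N) f g.
Proof.
move=> mf mg ae_cvg eps B eps0 mB Bfin delta delta0.
have [B' [mB' B'delta /= unif]] := @ae_pointwise_almost_uniform _ _ _ mu f g B
  delta (fun n => measurable_funS measurableT (@subsetT _ B) (mf n))
  (measurable_funS measurableT (@subsetT _ B) mg) mB Bfin
  (filterS (fun t cvg_t _ => cvg_t) ae_cvg) delta0.
have near_g : nbhs (g : {uniform` (B `\` B') -> R})
    [set h | forall t, (B `\` B') t -> ball (g t) eps (h t)].
  apply/uniform_nbhs; exists [set xy : R * R | ball xy.1 eps xy.2].
  by split; [exact: (@entourage_ball _ _ (PosNum eps0)) | move=> h /=].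
have [N _ f_near] := unif _ near_g.
exists N => n /f_near /= fn_near; rewrite (le_lt_trans _ B'delta)//.
apply: le_measure; rewrite ?inE//.
  by apply: measurableI => //; exact: measurable_far_set.
move=> t [Bt far_t]; apply: contrapT => B't.
by have := fn_near t (conj Bt B't); rewrite /ball /= distrC ltNge far_t.
Qed.

Lemma ae_eventually_not_mem (S : nat -> set T) :
  (forall k, measurable (S k)) -> (\sum_(k <oo) mu (S k) < +oo)%E ->
  {ae mu, forall t, \forall k \near \oo, ~ S k t}.
Proof.
move=> mS summable; exists (lim_sup_set S); split.
- by apply: bigcapT_measurable => n; exact: bigcup_measurable.
- exact: lim_sup_set_cvg0.
move=> t /= not_eventually n _; apply: contrapT => not_from_n.
by apply: not_eventually; exists n => // k /= nk Skt; apply: not_from_n; exists k.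
Qed.

Lemma ae_cvg_summable_far_sets (h : nat -> T -> R) (g : T -> R)
    (B : nat -> set T) :
  (forall n, measurable_fun setT (h n)) -> measurable_fun setT g ->
  (forall k, measurable (B k)) -> {homo B : j k / (j <= k)%N >-> j `<=` k} ->
  (forall n, [set t | h n t != 0] `<=` \bigcup_k B k) ->
  [set t | g t != 0] `<=` \bigcup_k B k ->
  (\sum_(k <oo) mu (B k `&` far_set (h k) g k.+1%:R^-1) < +oo)%E ->
  {ae mu, forall t, h n t @[n --> \oo] --> g t}.
Proof.
move=> mh mg mB B_mono h_supp g_supp summable.
have mS k : measurable (B k `&` far_set (h k) g k.+1%:R^-1).
  exact/measurableI/measurable_far_set.
move: (ae_eventually_not_mem mS summable); apply: filterS => t near_t.
have [[k0 _ B_t]|notB_t] := pselect ((\bigcup_k B k) t).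
  apply: cvg_lt_invS; near=> k; rewrite ltNge; apply/negP => far_t.
  have Bkt : B k t by apply: B_mono B_t; near: k; exists k0.
  have : ~ (B k `&` far_set (h k) g k.+1%:R^-1) t by near: k.
  by apply; split.
have zero_at_t (u : T -> R) : [set t | u t != 0] `<=` \bigcup_k B k -> u t = 0.
  by move=> u_supp; apply: contrapT => /eqP /u_supp.
rewrite zero_at_t// (_ : h^~ t = fun=> 0); first exact: cvg_cst.
by apply/funext => n; rewrite zero_at_t.
Unshelve. all: by end_near.
Qed.

Definition finite_measure_set (A : set T) := measurable A /\ (mu A < +oo)%E.

Lemma finite_measure_setU (A B : set T) :
  finite_measure_set A -> finite_measure_set B -> finite_measure_set (A `|` B).
Proof.
move=> [mA muA] [mB muB]; split; first exact: measurableU.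
exact: le_lt_trans (measureU2 _ _ _) (lte_add_pinfty muA muB).
Qed.

Lemma finite_measure_bigcup_ord (C : nat -> set T) (k : nat) :
  (forall m, finite_measure_set (C m)) ->
  finite_measure_set (\bigcup_(m < k) C m).
Proof.
move=> C_fin; rewrite bigcup_mkord; split.
  by apply: bigsetU_measurable => m _; exact: (C_fin m).1.
rewrite (le_lt_trans (Boole_inequality _ _))//; first by move=> m _; exact: (C_fin m).1.
by apply/lte_sum_pinfty => m _; exact: (C_fin m).2.
Qed.

Section extraction.
Context {I : Type}.
Variables (Cg : nat -> set T) (Cf : I -> nat -> set T) (pick : set T -> nat -> I).
Hypothesis Cg_fin : forall m, finite_measure_set (Cg m).
Hypothesis Cf_fin : forall i m, finite_measure_set (Cf i m).

(* In use, [Cg] and [Cf i] cover the supports of g and of f i by sets of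
   finite measure, so that [stage_cover k] covers the supports of g and of
   the f (stage_index j), j < k. *)
Fixpoint stage_cover k : nat -> set T :=
  if k is k'.+1 then fun m =>
    stage_cover k' m `|` Cf (pick (\bigcup_(j < k') stage_cover k' j) k') m
  else Cg.

Definition stage_set k := \bigcup_(m < k) stage_cover k m.

Definition stage_index k := pick (stage_set k) k.

Lemma stage_coverS k m :
  stage_cover k.+1 m = stage_cover k m `|` Cf (stage_index k) m.
Proof. by []. Qed.

Lemma stage_cover_finite k m : finite_measure_set (stage_cover k m).
Proof.
elim: k m => [//|k IHk] m; rewrite stage_coverS.
exact: finite_measure_setU.
Qed.

Lemma stage_set_finite k : finite_measure_set (stage_set k).
Proof. exact/finite_measure_bigcup_ord/stage_cover_finite. Qed.

Lemma stage_cover_mono m : {homo stage_cover^~ m : j k / (j <= k)%N >-> j `<=` k}.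
Proof.
move=> j k; elim: k => [|k IHk]; first by rewrite leqn0 => /eqP ->.
rewrite leq_eqVlt ltnS => /predU1P[-> //|/IHk jk].
by rewrite stage_coverS => t /jk; left.
Qed.

Lemma stage_set_mono : {homo stage_set : j k / (j <= k)%N >-> j `<=` k}.
Proof.
move=> j k jk t [m /= mj cover_t]; exists m; first exact: leq_trans mj jk.
exact: stage_cover_mono cover_t.
Qed.

Lemma stage_cover_sub k m : stage_cover k m `<=` \bigcup_n stage_set n.
Proof.
move=> t cover_t; exists (maxn k m.+1) => //; exists m.
  by rewrite /= leq_max ltnSn orbT.
by apply: stage_cover_mono cover_t; rewrite leq_maxl.
Qed.

Lemma Cg_sub_stage_sets m : Cg m `<=` \bigcup_n stage_set n.
Proof. exact: (@stage_cover_sub 0). Qed.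

Lemma Cf_sub_stage_sets j m : Cf (stage_index j) m `<=` \bigcup_n stage_set n.
Proof. by move=> t Cf_t; apply: (@stage_cover_sub j.+1 m); right. Qed.

End extraction.

Definition in_loc_meas_closure {I : Type} (f : I -> T -> R) (g : T -> R) :=
  forall (e : R) (B : set T), 0 < e -> finite_measure_set B ->
  forall delta : R, 0 < delta ->
  exists i, (mu (B `&` far_set (f i) g e) < delta%:E)%E.

Lemma cvg_loc_meas_closure (I : Type) (le : I -> I -> Prop)
    (f : I -> T -> R) (g : T -> R) :
  directed le -> cvg_loc_meas mu le f g -> in_loc_meas_closure f g.
Proof.
move=> [_ le_refl _ _] f_cvg e B e0 [mB muB] delta delta0.
by have [i f_near] := f_cvg e B e0 mB muB delta delta0; exists i; exact: f_near.
Qed.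

Lemma ae_cvg_extraction (I : Type) (f : I -> T -> R) (g : T -> R) :
  inhabited I -> (forall i, Eset mu (f i)) -> Eset mu g ->
  in_loc_meas_closure f g ->
  exists s : nat -> I, {ae mu, forall t, f (s n) t @[n --> \oo] --> g t}.
Proof.
move=> [i0] Ef [mg [Cg [Cg_fin g_supp]]] g_closure.
have [Cf Cf_spec] := choice (fun i => (Ef i).2).
have Cf_fin i : forall m, finite_measure_set (Cf i m) := (Cf_spec i).1.
pose delta k : R := 1 / (2 ^ k.+1)%:R.
pose good S k i := finite_measure_set S ->
  (mu (S `&` far_set (f i) g k.+1%:R^-1) < (delta k)%:E)%E.
have good_ex S k : exists i, good S k i.
  have [S_fin|] := pselect (finite_measure_set S); last by exists i0.
  have e0 : 0 < k.+1%:R^-1 :> R by rewrite invr_gt0 ltr0Sn.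
  have delta0 : 0 < delta k by rewrite divr_gt0 // ltr0n expn_gt0.
  by have [i ?] := g_closure _ _ e0 S_fin _ delta0; exists i.
have [pick pickP] : {pick : set T -> nat -> I & forall S k, good S k (pick S k)}.
  by exists (fun S => projT1 (choice (good_ex S))) => S; exact: projT2 (choice _).
pose s := stage_index Cg Cf pick.
exists s; apply: (@ae_cvg_summable_far_sets _ g (stage_set Cg Cf pick)).
- by move=> n; exact: (Ef _).1.
- exact: mg.
- by move=> k; case: (stage_set_finite pick Cg_fin Cf_fin k).
- exact: stage_set_mono.
- by move=> n t /(Cf_spec (s n)).2 [m _]; exact: Cf_sub_stage_sets.
- by move=> t /g_supp [m _]; exact: Cg_sub_stage_sets.
apply: (@le_lt_trans _ _ 1%:E); last exact: ltry.
apply: le_trans (epsilon_trick0 xpredT ler01).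
apply: lee_nneseries => [k _ _|k _]; first exact: measure_ge0.
exact/ltW/pickP/stage_set_finite.
Qed.

End local_convergence_in_measure.

Theorem corollary5p17 (d : measure_display) (T : measurableType d)
    (R : realType) (mu : {measure set T -> \bar R}) (A : set (T -> R)) :
  semi_finite mu -> A `<=` Eset mu -> ae_saturated mu A ->
  (closed_loc_meas mu A <->
   forall (f : nat -> T -> R) (g : T -> R),
     (forall n, A (f n)) -> Eset mu g ->
     {ae mu, forall t, f n t @[n --> \oo] --> g t} -> A g).
Proof.
move=> _ A_E _; split.
- move=> A_closed f g fA Eg f_ae; apply: (A_closed _ _ directed_leq f g fA Eg).
  apply: (ae_cvg_cvg_loc_meas _ Eg.1 f_ae) => n.
  exact: (A_E _ (fA n)).1.
- move=> A_seq_closed I le le_directed f g fA Eg f_cvg.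
  have [I_inhabited _ _ _] := le_directed.
  have [s fs_ae] := ae_cvg_extraction I_inhabited (fun i => A_E _ (fA i)) Eg
    (cvg_loc_meas_closure le_directed f_cvg).
  exact: A_seq_closed (fun n => fA (s n)) Eg fs_ae.
Qed.
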